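(* Fix any quantile vector $\mathbf{q}=(q_1\ge\dots\ge q_N)$ with $q_i\in(0,1)$. Then $\mathrm{STR}(\mathbf{q},\pi)\ge\mathrm{OPT}(\mathbf{q},\pi)$ for every $\pi\in\Pi_{n,m,c}\setminus\mathcal{E}_2$.
   Context: Setting: distributions $F_B,F_S$ with quantile functions $b(q)=\inf\{x:\Pr_{b\sim F_B}[b\le x]\ge q\}$, $s(q)=\inf\{x:\Pr_{s\sim F_S}[s\le x]\ge q\}$, and $b(q)\ge s(q)$ for all $q\in(0,1)$ ($F_B$ first-order stochastically dominates $F_S$). Integers $m\ge n\ge 20$ and $c\ge1$; $N=m+n+2c$. $\Pi_{n,m,c}$ is the set of maps $\pi:[N]\to\{\mathrm{BO},\mathrm{BN},\mathrm{SO},\mathrm{SN}\}$ with $m$, $c$, $n$, $c$ preimages respectively of $\mathrm{BO},\mathrm{BN},\mathrm{SO},\mathrm{SN}$; write $B_{\mathrm{Old}}^\pi,B_{\mathrm{New}}^\pi,S_{\mathrm{Old}}^\pi,S_{\mathrm{New}}^\pi$ for these preimages. Index $i$ labeled as buyer gives a buyer with value $b(q_i)$, labeled as seller gives a seller with value $s(q_i)$; the original market consists of old buyers and old sellers, the augmented market of all agents. $\mathrm{OPT}(\mathbf{q},\pi)$ is the first-best gains from trade in the original market; $\mathrm{STR}(\mathbf{q},\pi)$ is the gains from trade of Seller Trade Reduction in the augmented market. (First best: with buyer values $b^{(1)}\ge\dots$, seller values $s^{(1)}\le\dots$, $r=\max\{i: b^{(i)}\ge s^{(i)}\}$ ($0$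 if none), trade top $r$ buyers with bottom $r$ sellers, gains $\sum_{i\le r}(b^{(i)}-s^{(i)})$. STR: with $s^{(k)}=\infty$ beyond the number of sellers, if $b^{(r)}\ge s^{(r+1)}$ trade $r$ pairs, else only the top $r-1$ buyers with bottom $r-1$ sellers.) Let $p=\lceil n/10\rceil$, $I_1=\{1,\dots,p\}$, $I_2=\{p+1,\dots,2p\}$, $J_1=\{N-p+1,\dots,N\}$, $J_2=\{N-2p+1,\dots,N-p\}$. $\mathcal{E}_1$ is the set of $\pi$ with $|I_1\cap B_{\mathrm{New}}^\pi|\ge2$, $|I_2\cap B_{\mathrm{Old}}^\pi|\ge1$, $|J_1\cap S_{\mathrm{New}}^\pi|\ge2$, $|J_2\cap S_{\mathrm{Old}}^\pi|\ge1$. $\mathcal{E}_2=\{\pi\in\Pi_{n,m,c}:\pi\notin\mathcal{E}_1,\ S_{\mathrm{New}}^\pi\subseteq\{1,\dots,2n+2c\}\}$. *)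

From HB Require Import structures.
From mathcomp Require Import all_boot all_order all_algebra.
From mathcomp Require Import all_classical all_reals all_analysis.
Set Implicit Arguments. Unset Strict Implicit. Unset Printing Implicit Defensive.
Import Order.TTheory GRing.Theory Num.Theory.
Local Open Scope classical_set_scope.
Local Open Scope ring_scope.

Definition quantile (R : realType) (P : probability R R) (q : R) : R :=
  inf [set x : R | (q%:E <= P [set` `]-oo, x]])%E].

(** Agent labels: old buyer, new buyer, old seller, new seller. *)
Inductive label := BO | BN | SO | SN.

Definition label_eqb (a b : label) : bool :=
  match a, b with
  | BO, BO | BN, BN | SO, SO | SN, SN => true
  | _, _ => false
  end.

Lemma label_eqP : Equality.axiom label_eqb.
Proof. by case; case; constructor. Qed.

HB.instance Definition _ := hasDecEq.Build label label_eqP.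

(** The set Pi_{n,m,c}: labellings of [N] = 'I_(m+n+2c) (index i+1 in the
    paper is the ordinal i here) with m, c, n, c preimages of BO, BN, SO, SN. *)
Definition in_Pi (m n c : nat) (pi : {ffun 'I_(m + n + 2 * c) -> label}) : Prop :=
  [/\ #|[set i | pi i == BO]| = m, #|[set i | pi i == BN]| = c,
      #|[set i | pi i == SO]| = n & #|[set i | pi i == SN]| = c].

Definition pp (n : nat) : nat := (n + 9) %/ 10.

(** The event E_1 (1-based indices of the paper shifted down by one). *)
Definition in_E1 (m n c : nat) (pi : {ffun 'I_(m + n + 2 * c) -> label}) : Prop :=
  let N := m + n + 2 * c in
  let p := pp n in
  [/\ 2 <= #|[set i : 'I_N | (i < p)%N && (pi i == BN)]|,
      1 <= #|[set i : 'I_N | [&& (p <= i)%N, (i < 2 * p)%N & pi i == BO]]|,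
      2 <= #|[set i : 'I_N | (N - p <= i)%N && (pi i == SN)]|
    & 1 <= #|[set i : 'I_N | [&& (N - 2 * p <= i)%N, (i < N - p)%N & pi i == SO]]|]%N.

(** The event E_2: not in E_1, and every new seller has (1-based) index
    at most 2n+2c. *)
Definition in_E2 (m n c : nat) (pi : {ffun 'I_(m + n + 2 * c) -> label}) : Prop :=
  in_Pi pi /\ ~ in_E1 pi /\
  (forall i : 'I_(m + n + 2 * c), pi i = SN -> (i < 2 * n + 2 * c)%N).

Section Market.
Variable R : realType.

Definition sort_desc (s : seq R) : seq R := sort (fun x y => y <= x) s.
Definition sort_asc (s : seq R) : seq R := sort (fun x y => x <= y) s.

(** r = max { i : b^(i) >= s^(i) } (0 if none), i ranging over indices
    where both exist; bs and ss are 0-indexed (bs`_i = b^(i+1)). *)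
Definition fb_r (bs ss : seq R) : nat :=
  \max_(i < minn (size bs) (size ss) | ss`_i <= bs`_i) i.+1.

Definition gains (bs ss : seq R) (k : nat) : R :=
  \sum_(i < k) (bs`_i - ss`_i).

Definition first_best (bs ss : seq R) : R := gains bs ss (fb_r bs ss).

(** Seller Trade Reduction: with s^(k) = +oo beyond the number of sellers,
    trade r pairs if b^(r) >= s^(r+1), else r-1 pairs. *)
Definition str_trades (bs ss : seq R) : nat :=
  let r := fb_r bs ss in
  if (r < size ss)%N && (ss`_r <= bs`_(r.-1)) then r else r.-1.

Definition str_gains (bs ss : seq R) : R := gains bs ss (str_trades bs ss).

End Market.

Section Instance.
Variables (R : realType) (FB FS : probability R R) (m n c : nat).
Let N := (m + n + 2 * c)%N.
Variables (q : 'I_N -> R) (pi : {ffun 'I_N -> label}).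

Definition values_of (F : probability R R) (P : label -> bool) : seq R :=
  [seq quantile F (q i) | i <- enum 'I_N & P (pi i)].

Definition OPT : R :=
  first_best (sort_desc (values_of FB (fun l => l == BO)))
             (sort_asc (values_of FS (fun l => l == SO))).

Definition STR : R :=
  str_gains (sort_desc (values_of FB (fun l => (l == BO) || (l == BN))))
            (sort_asc (values_of FS (fun l => (l == SO) || (l == SN)))).

End Instance.

From HB Require Import structures.
From mathcomp Require Import all_boot all_order all_algebra.
From mathcomp Require Import all_classical all_reals all_analysis.
From mathcomp Require Import zify.
Import Order.TTheory GRing.Theory Num.Theory numFieldNormedType.Exports.
Local Open Scope ring_scope.

(** Let [r] be the number of first-best trades in the original market.  Adding
    agents can only raise the k-th highest buyer value and lower the k-th lowest
    seller value, so the augmented market has at least [r] profitable pairs,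
    each of its first [r] pairs gains at least as much as the original one, and
    STR keeps all [r] of them as soon as the (r+1)-st cheapest seller of the
    augmented market costs at most [M], the r-th highest old buyer value.
    Outside E_2 some new seller [j] has at most [m] agents ranked below it, so
    the old sellers below [j] are no more numerous than the old buyers at or
    above [j].  Were [s j > M], the at least [r] old sellers of value at most
    [M] would all rank below [j] and only the at most [r - 1] old buyers of value
    above [M] could rank at or above it; hence [s j <= M], and [j] is the extra
    cheap seller. *)

Section Quantile.
Context {R : realType} (F : probability R R).
Local Open Scope classical_set_scope.

(* [F `]-oo, x]] is the cdf of the identity random variable, whose limits at
   [-oo] and [+oo] are in the library. *)
Let idR : R -> R := idfun.
#[local] HB.instance Definition _ :=
  @isMeasurableFun.Build _ _ _ _ idR (@measurable_id _ _ setT).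

Let cdfF (x : R) : R := fine (cdf (idR : {RV F >-> R}) x).

Let cdfFE x : (cdfF x)%:E = F `]-oo, x].
Proof. by rewrite /cdfF fineK ?fin_num_measure //= preimage_id. Qed.

Lemma le_quantile x y : 0 < x -> y < 1 -> x <= y -> quantile F x <= quantile F y.
Proof.
move=> x_gt0 y_lt1 le_xy.
have cdfF_y1 : cdfF @ +oo --> (1 : R) by exact/fine_cvg/cvg_cdfy1.
have cdfF_Ny0 : cdfF @ -oo --> (0 : R) by exact/fine_cvg/cvg_cdfNy0.
have [M [_ cdf_gty]] := cvgr_gt _ cdfF_y1 _ y_lt1.
have [M' [_ cdf_ltx]] := cvgr_lt _ cdfF_Ny0 _ x_gt0.
apply: lb_le_inf.
  exists (M + 1) => /=; rewrite -cdfFE lee_fin; apply/ltW/cdf_gty.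
  by rewrite ltrDl.
move=> z /= le_yz; apply: ge_inf; last by apply: le_trans le_yz; rewrite lee_fin.
exists (M' - 1) => w /= le_xw; rewrite leNgt; apply/negP => lt_wM.
have /cdf_ltx : w < M' by rewrite (lt_le_trans lt_wM) // gerDl lerN10.
by rewrite -cdfFE lee_fin in le_xw; rewrite ltNge le_xw.
Qed.

End Quantile.

Section SortedCount.
Context {T : eqType} {leT : rel T} {P : pred T}.
Hypothesis leT_tr : transitive leT.
Hypothesis P_leT : forall x y, leT x y -> P y -> P x.

Lemma sorted_nth_count x0 s i : sorted leT s -> (i < size s)%N ->
  P (nth x0 s i) = (i < count P s)%N.
Proof.
move=> sorted_s lt_i_s; set y := nth x0 s i.
have def_s : s = take i s ++ y :: drop i.+1 s.
  by rewrite /y -drop_nth ?cat_take_drop.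
have size_take : size (take i s) = i by rewrite size_takel // ltnW.
move: sorted_s; rewrite (sorted_pairwise leT_tr) {1}def_s pairwise_cat /=.
case/and3P=> /allrelP le_take _ /andP[/allP le_drop _].
rewrite def_s count_cat /=; case: (boolP (P y)) => Py.
  have /eqP -> : count P (take i s) == i.
    rewrite -{2}size_take -all_count; apply/allP => z z_take.
    exact: P_leT (le_take z y z_take (mem_head _ _)) Py.
  by rewrite add1n addnS ltnS leq_addr.
have : ~~ has P (drop i.+1 s).
  by apply/hasPn => z /le_drop le_yz; apply: contra Py; apply: P_leT.
rewrite has_count -leqNgt leqn0 => /eqP ->.
have := count_size P (take i s); rewrite size_take => le_cnt.
by rewrite add0n addn0 ltnNge le_cnt.
Qed.

End SortedCount.

Section SortedValues.
Context {R : realType}.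
Implicit Types (s : seq R) (P : pred R).

Lemma nth_sort_desc {P s} {i : nat} :
  (forall x y, x <= y -> P x -> P y) -> (i < size s)%N ->
  P (sort_desc s)`_i = (i < count P s)%N.
Proof.
move=> P_up lt_i_s; rewrite -(count_sort (fun x y : R => y <= x)).
apply: (sorted_nth_count (P := P) ge_trans) => [x y /= /P_up//||].
  by apply: sort_sorted => x y; apply: le_total.
by rewrite size_sort.
Qed.

Lemma nth_sort_asc {P s} {i : nat} :
  (forall x y, x <= y -> P y -> P x) -> (i < size s)%N ->
  P (sort_asc s)`_i = (i < count P s)%N.
Proof.
move=> P_down lt_i_s; rewrite -(count_sort (fun x y : R => x <= y)).
apply: (sorted_nth_count le_trans P_down); last by rewrite size_sort.
by apply: sort_sorted => x y; apply: le_total.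
Qed.

Lemma nth_sort_desc_subseq s s' i : subseq s s' -> (i < size s)%N ->
  (sort_desc s)`_i <= (sort_desc s')`_i.
Proof.
move=> sub_ss' lt_i_s; set x := (sort_desc s)`_i.
have x_le_up y z : y <= z -> x <= y -> x <= z.
  by move=> le_yz le_xy; apply: le_trans le_xy le_yz.
have lt_i_s' := leq_trans lt_i_s (size_subseq sub_ss').
rewrite (nth_sort_desc x_le_up lt_i_s').
by apply: leq_trans (leq_count_subseq _ sub_ss'); rewrite -(nth_sort_desc x_le_up).
Qed.

Lemma nth_sort_asc_subseq s s' i : subseq s s' -> (i < size s)%N ->
  (sort_asc s')`_i <= (sort_asc s)`_i.
Proof.
move=> sub_ss' lt_i_s; set x := (sort_asc s)`_i.
have le_x_down y z : y <= z -> z <= x -> y <= x.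
  by move=> le_yz; apply: le_trans le_yz.
have lt_i_s' := leq_trans lt_i_s (size_subseq sub_ss').
rewrite (nth_sort_asc le_x_down lt_i_s').
by apply: leq_trans (leq_count_subseq _ sub_ss'); rewrite -(nth_sort_asc le_x_down).
Qed.

End SortedValues.

Section FirstBest.
Context {R : realType}.
Implicit Types B S : seq R.

Lemma sorted_ge_nth {B} {i j : nat} :
  sorted >=%R B -> (i <= j)%N -> (j < size B)%N -> B`_j <= B`_i.
Proof.
move=> sorted_B le_ij lt_j; have lt_i := leq_ltn_trans le_ij lt_j.
by apply: (sorted_leq_nth ge_trans lexx 0 sorted_B); rewrite ?inE.
Qed.

Lemma sorted_le_nth {S} {i j : nat} :
  sorted <=%R S -> (i <= j)%N -> (j < size S)%N -> S`_i <= S`_j.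
Proof.
move=> sorted_S le_ij lt_j; have lt_i := leq_ltn_trans le_ij lt_j.
by apply: (le_sorted_leq_nth 0 sorted_S); rewrite ?inE.
Qed.

Lemma fb_r_le_size B S : (fb_r B S <= minn (size B) (size S))%N.
Proof. by apply/bigmax_leqP => i _; exact: ltn_ord. Qed.

Lemma fb_r_ge B S i : (i < minn (size B) (size S))%N -> S`_i <= B`_i ->
  (i < fb_r B S)%N.
Proof. by move=> lt_i le_SB; exact: (leq_bigmax_cond (Ordinal lt_i)). Qed.

Lemma fb_r_profitable {B S} : (0 < fb_r B S)%N ->
  S`_(fb_r B S).-1 <= B`_(fb_r B S).-1.
Proof.
rewrite /fb_r.
case: (pickP (fun i : 'I_(minn (size B) (size S)) => S`_i <= B`_i)) => [i0 Pi0|P0].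
  by rewrite (bigop.bigmax_eq_arg i0) //; case: arg_maxnP.
by rewrite big_pred0.
Qed.

Lemma fb_r_prefix_profitable B S i : sorted >=%R B -> sorted <=%R S ->
  (i < fb_r B S)%N -> S`_i <= B`_i.
Proof.
move=> sorted_B sorted_S lt_i_r.
have r_gt0 : (0 < fb_r B S)%N by apply: leq_ltn_trans lt_i_r.
have le_i : (i <= (fb_r B S).-1)%N by rewrite -ltnS prednK.
have := fb_r_le_size B S; rewrite leq_min -(prednK r_gt0) => /andP[lt_B lt_S].
apply: le_trans _ (sorted_ge_nth sorted_B le_i lt_B).
exact: le_trans (sorted_le_nth sorted_S le_i lt_S) (fb_r_profitable r_gt0).
Qed.

Lemma fb_r_mono {B S B' S'} :
  (forall i, (i < size B)%N -> B`_i <= B'`_i) ->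
  (forall i, (i < size S)%N -> S'`_i <= S`_i) ->
  (size B <= size B')%N -> (size S <= size S')%N ->
  (fb_r B S <= fb_r B' S')%N.
Proof.
move=> le_B le_S le_sizeB le_sizeS.
have [->//|r_gt0] := posnP (fb_r B S).
have := fb_r_le_size B S; rewrite leq_min -(prednK r_gt0) => /andP[lt_B lt_S].
apply: fb_r_ge; first by rewrite leq_min (leq_trans lt_B) ?(leq_trans lt_S).
apply: le_trans (le_S _ lt_S) _; apply: le_trans (le_B _ lt_B).
exact: fb_r_profitable.
Qed.

Lemma str_trades_le_fb_r B S : (str_trades B S <= fb_r B S)%N.
Proof. by rewrite /str_trades; case: ifP => // _; exact: leq_pred. Qed.

Lemma gains_le_prefix {B S} {k k' : nat} : sorted >=%R B -> sorted <=%R S ->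
  (k <= k')%N -> (k' <= fb_r B S)%N -> gains B S k <= gains B S k'.
Proof.
move=> sorted_B sorted_S le_kk' le_k'r.
rewrite /gains -!(big_mkord xpredT (fun i => B`_i - S`_i)).
rewrite (big_cat_nat (leq0n k) le_kk') /= lerDl big_nat_cond.
apply: sumr_ge0 => i /andP[/andP[_ lt_ik'] _]; rewrite subr_ge0.
exact: fb_r_prefix_profitable (leq_trans lt_ik' le_k'r).
Qed.

Theorem first_best_le_str_gains B S B' S' :
  sorted >=%R B' -> sorted <=%R S' ->
  (forall i, (i < size B)%N -> B`_i <= B'`_i) ->
  (forall i, (i < size S)%N -> S'`_i <= S`_i) ->
  (size B <= size B')%N -> (size S < size S')%N ->
  ((0 < fb_r B S)%N -> S'`_(fb_r B S) <= B'`_(fb_r B S).-1) ->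
  first_best B S <= str_gains B' S'.
Proof.
move=> sorted_B' sorted_S' le_B le_S le_sizeB lt_sizeS keeps_r_trades.
rewrite /first_best /str_gains; set r := fb_r B S; set t := str_trades B' S'.
have := fb_r_le_size B S; rewrite leq_min => /andP[r_le_B r_le_S].
have r_le_r' := fb_r_mono le_B le_S le_sizeB (ltnW lt_sizeS).
have r_le_t : (r <= t)%N.
  rewrite /t /str_trades; have [->//|r_gt0] := posnP r.
  case: ifP => [_ | no_extra_trade]; first exact: r_le_r'.
  rewrite -ltnS prednK ?(leq_trans r_gt0 r_le_r') // ltn_neqAle r_le_r' andbT.
  apply: contraFneq no_extra_trade => <-.
  by rewrite (leq_ltn_trans r_le_S lt_sizeS) keeps_r_trades.
apply: le_trans (gains_le_prefix sorted_B' sorted_S' r_le_t (str_trades_le_fb_r _ _)).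
apply: ler_sum => i _; have lt_ir := ltn_ord i.
by apply: lerB; [apply: le_B | apply: le_S]; apply: leq_trans lt_ir _.
Qed.

End FirstBest.

Section Counting.
Variable T : eqType.
Implicit Types (a : pred T) (s : seq T).

Lemma count_predU_disjoint a1 a2 s : (forall x, a1 x -> ~~ a2 x) ->
  count (predU a1 a2) s = (count a1 s + count a2 s)%N.
Proof.
move=> disj; rewrite -count_predUI.
rewrite (@eq_count _ (predI a1 a2) pred0) ?count_pred0 ?addn0 //.
by move=> x /=; apply/andP => -[/disj/negbTE->].
Qed.

Lemma count_subpred_lt a a' s x : subpred a a' -> x \in s -> a' x -> ~~ a x ->
  (count a s < count a' s)%N.
Proof.
move=> sub_aa' s_x a'_x not_a_x.
have split_a' : a' =1 predU a (predD a' a).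
  by move=> y /=; case: (boolP (a y)) => [/sub_aa'|].
rewrite (eq_count split_a') count_predU_disjoint => [|y /= ->//].
rewrite -addn1 leq_add2l -has_count; apply/hasP; exists x => //=.
by rewrite not_a_x.
Qed.

End Counting.

Lemma count_gt_ord_le {N : nat} (j : 'I_N) :
  (count (fun i : 'I_N => j < i) (enum 'I_N) <= N - j.+1)%N.
Proof.
have := count_map (@nat_of_ord N) (fun k => (j < k)%N) (enum 'I_N).
rewrite val_enum_ord => <-.
have -> : iota 0 N = iota 0 j.+1 ++ iota j.+1 (N - j.+1) by rewrite -iotaD subnKC.
rewrite count_cat.
have -> : count (fun k => (j < k)%N) (iota 0 j.+1) = 0%N.
  apply/eqP; rewrite -leqn0 leqNgt -has_count; apply/hasPn => k.
  by rewrite mem_iota add0n ltnS -leqNgt.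
by rewrite add0n (leq_trans (count_size _ _)) ?size_iota.
Qed.

Lemma card_classical_set (T : finType) (P : pred T) :
  #|[set x | P x]%classic| = count P (enum T).
Proof.
rewrite enumT cardE /enum_mem size_filter; apply: eq_count => x /=.
by apply/idP/idP; rewrite in_setE.
Qed.

Section LabelledMarket.
Context {R : realType} {N : nat} {b s : 'I_N -> R} { pi : 'I_N -> label }.

Definition labelled_values (f : 'I_N -> R) (L : pred label) : seq R :=
  [seq f i | i <- enum 'I_N & L (pi i)].

Lemma count_labelled_values f L (P : pred R) :
  count P (labelled_values f L) = count [pred i | L (pi i) && P (f i)] (enum 'I_N).
Proof. by rewrite count_map count_filter; apply: eq_count => i /=; rewrite andbC. Qed.

Lemma subseq_labelled_values f (L L' : pred label) : subpred L L' ->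
  subseq (labelled_values f L) (labelled_values f L').
Proof.
move=> sub_LL'; apply: map_subseq.
rewrite -[X in subseq X _](@eq_filter _ (predI (L \o pi) (L' \o pi))).
  by rewrite filter_predI filter_subseq.
by move=> i /=; case: (boolP (L (pi i))) => [/sub_LL'->|].
Qed.

Definition few_old_sellers_below (j : 'I_N) : bool :=
  (count [pred i | (pi i == SO) && (j < i)%N] (enum 'I_N)
    <= count [pred i | (pi i == BO) && (i <= j)%N] (enum 'I_N))%N.

Lemma few_old_sellers_below_of_late (j : 'I_N) :
  (N - j.+1 <= count [pred i | pi i == BO] (enum 'I_N))%N -> few_old_sellers_below j.
Proof.
move=> late_j; rewrite /few_old_sellers_below.
have split_BO : count [pred i | pi i == BO] (enum 'I_N) =
    (count [pred i | (pi i == BO) && (i <= j)%N] (enum 'I_N)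
     + count [pred i | (pi i == BO) && (j < i)%N] (enum 'I_N))%N.
  rewrite -count_predU_disjoint => [|i /andP[_ le_ij]]; last first.
    by rewrite /= ltnNge le_ij andbF.
  by apply: eq_count => i /=; rewrite -andb_orr leqNgt orNb andbT.
have old_after : (count [pred i | (pi i == SO) && (j < i)%N] (enum 'I_N)
    + count [pred i | (pi i == BO) && (j < i)%N] (enum 'I_N) <= N - j.+1)%N.
  rewrite -count_predU_disjoint => [|i /andP[/eqP pi_i _]]; last by rewrite /= pi_i.
  apply: leq_trans _ (count_gt_ord_le j).
  by apply: sub_count => i /= /orP[]/andP[].
lia.
Qed.

Hypothesis b_noninc : {homo b : i j / (i <= j)%N >-> i >= j}.
Hypothesis s_noninc : {homo s : i j / (i <= j)%N >-> i >= j}.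
Hypothesis s_le_b : forall i, s i <= b i.

Lemma seller_value_le_of_count (j : 'I_N) (x : R) :
  few_old_sellers_below j ->
  (count [pred i | (pi i == BO) && (x < b i)%R] (enum 'I_N)
    < count [pred i | (pi i == SO) && (s i <= x)%R] (enum 'I_N))%N ->
  s j <= x.
Proof.
move=> few_after; apply: contraLR; rewrite -ltNge -leqNgt => lt_x_sj.
apply: leq_trans (leq_trans few_after _).
  apply: sub_count => i /andP[/= -> le_six]; rewrite ltnNge.
  by apply: contraTN (le_lt_trans le_six lt_x_sj) => /s_noninc; rewrite -leNgt.
apply: sub_count => i /andP[/= -> /b_noninc le_bj_bi].
exact: lt_le_trans lt_x_sj (le_trans (s_le_b j) le_bj_bi).
Qed.

Let B := sort_desc (labelled_values b (fun l => l == BO)).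
Let S := sort_asc (labelled_values s (fun l => l == SO)).
Let B' := sort_desc (labelled_values b (fun l => (l == BO) || (l == BN))).
Let S' := sort_asc (labelled_values s (fun l => (l == SO) || (l == SN))).

Lemma str_keeps_first_best_trades {j : 'I_N} : pi j = SN ->
  few_old_sellers_below j ->
  (0 < fb_r B S)%N -> S'`_(fb_r B S) <= B'`_(fb_r B S).-1.
Proof.
move=> pi_j few_after r_gt0.
have := fb_r_le_size B S; rewrite leq_min !size_sort -(prednK r_gt0).
case/andP=> lt_B lt_S; rewrite prednK //.
set r := fb_r B S in r_gt0 lt_B lt_S *; set M := B`_r.-1.
have few_buyers_above :
    (count [pred i | (pi i == BO) && (M < b i)%R] (enum 'I_N) <= r.-1)%N.
  have M_lt_up y z : y <= z -> M < y -> M < z.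
    by move=> le_yz lt_My; apply: lt_le_trans lt_My le_yz.
  have := nth_sort_desc M_lt_up lt_B.
  by rewrite ltxx count_labelled_values => /esym/negbT; rewrite -leqNgt.
have le_M_down y z : y <= z -> z <= M -> y <= M by move=> le_yz; apply: le_trans.
have many_sellers_below :
    (r <= count [pred i | (pi i == SO) && (s i <= M)%R] (enum 'I_N))%N.
  have := nth_sort_asc le_M_down lt_S.
  by rewrite count_labelled_values (prednK r_gt0) fb_r_profitable.
have le_sj_M : s j <= M.
  apply: seller_value_le_of_count few_after _.
  by rewrite (leq_ltn_trans few_buyers_above) // prednK.
have lt_r_S' : (r < count (fun y => (y <= M)%R)
                      (labelled_values s (fun l => (l == SO) || (l == SN))))%N.
  rewrite count_labelled_values; apply: leq_ltn_trans many_sellers_below _.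
  apply: (@count_subpred_lt _ _ _ _ j); rewrite ?mem_enum //= ?pi_j ?le_sj_M //.
  by move=> i /= /andP[-> ->].
have le_M_B' : M <= B'`_r.-1.
  by apply: nth_sort_desc_subseq lt_B; apply: subseq_labelled_values => l /eqP ->.
apply: le_trans _ le_M_B'.
have lt_r_size := leq_trans lt_r_S' (count_size _ _).
have := nth_sort_asc le_M_down lt_r_size.
by rewrite lt_r_S'.
Qed.

Theorem first_best_le_str_of_new_seller {j : 'I_N} : pi j = SN ->
  few_old_sellers_below j ->
  first_best B S <= str_gains B' S'.
Proof.
move=> pi_j few_after.
have sub_b : subseq (labelled_values b (fun l => l == BO))
    (labelled_values b (fun l => (l == BO) || (l == BN))).
  by apply: subseq_labelled_values => l /= ->.
have sub_s : subseq (labelled_values s (fun l => l == SO))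
    (labelled_values s (fun l => (l == SO) || (l == SN))).
  by apply: subseq_labelled_values => l /= ->.
apply: first_best_le_str_gains.
- by apply: sort_sorted => x y; exact: le_total.
- by apply: sort_sorted => x y; exact: le_total.
- by move=> i; rewrite size_sort; apply: nth_sort_desc_subseq.
- by move=> i; rewrite size_sort; apply: nth_sort_asc_subseq.
- by rewrite !size_sort size_subseq.
- rewrite !size_sort -!count_predT !count_labelled_values.
  apply: (@count_subpred_lt _ _ _ _ j); rewrite ?mem_enum //= ?pi_j //.
  by move=> i /= /andP[->].
- exact: str_keeps_first_best_trades pi_j few_after.
Qed.

End LabelledMarket.

Lemma late_new_seller {m n c : nat} { pi : {ffun 'I_(m + n + 2 * c) -> label} } :
  (0 < n)%N -> (n <= m)%N -> in_Pi pi -> ~ in_E2 pi ->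
  exists2 j : 'I_(m + n + 2 * c), pi j = SN & (m + n + 2 * c - j.+1 <= m)%N.
Proof.
move=> n_gt0 le_nm Pi_pi not_E2.
have [[_ _ two_late_SN _]|not_E1] := pselect (in_E1 pi).
  have le_pn : (pp n <= n)%N by rewrite /pp -ltnS ltn_divLR //; lia.
  move: two_late_SN; rewrite card_classical_set => /ltnW; rewrite -has_count.
  case/hasP=> j _ /andP[late /eqP pi_j]; exists j => //.
  (* [in_E1] uses ring-scope [+] and [*] on [nat]; restate [late] with [addn]/[muln]. *)
  have : (m + n + 2 * c - pp n <= @nat_of_ord (m + n + 2 * c) j)%N := late.
  lia.
have [j pi_j late] : exists2 j : 'I_(m + n + 2 * c), pi j = SN & (2 * n + 2 * c <= j)%N.
  apply: contra_notP not_E2 => no_late; split=> //; split=> // i pi_i.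
  by rewrite ltnNge; apply/negP => late; apply: no_late; exists i.
by exists j => //; lia.
Qed.

Theorem lemma3p2 (R : realType) (FB FS : probability R R)
  (dom : forall x : R, 0 < x < 1 -> quantile FS x <= quantile FB x)
  (m n c : nat) (hn : (20 <= n)%N) (hnm : (n <= m)%N) (hc : (1 <= c)%N)
  (q : 'I_(m + n + 2 * c) -> R)
  (hq01 : forall i, 0 < q i < 1)
  (hqdec : forall i j : 'I_(m + n + 2 * c), (i <= j)%N -> q j <= q i)
  (pi : {ffun 'I_(m + n + 2 * c) -> label})
  (hpi : in_Pi pi) (hE2 : ~ in_E2 pi) :
  OPT FB FS q pi <= STR FB FS q pi.
Proof.
have quantile_noninc (F : probability R R) :
    {homo (fun i => quantile F (q i)) : i j / (i <= j)%N >-> i >= j}.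
  move=> i j le_ij; apply: le_quantile (hqdec _ _ le_ij).
    by case/andP: (hq01 j).
  by case/andP: (hq01 i).
have n_gt0 : (0 < n)%N by apply: leq_trans hn.
have [j pi_j late_j] := late_new_seller n_gt0 hnm hpi hE2.
apply: (first_best_le_str_of_new_seller (quantile_noninc FB) (quantile_noninc FS)
         (fun i => dom _ (hq01 i)) pi_j).
apply: few_old_sellers_below_of_late; case: hpi => card_BO _ _ _.
by rewrite -card_classical_set card_BO.
Qed.
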